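(* Consider the segregation process with window size $w$ on a ring network of size $n$, started from a uniformly random initial configuration. For any fixed $w$, as $n\to\infty$, the probability that the process eventually reaches a frozen configuration converges to $1$.
   Context: Segregation process: the nodes of an $n$-cycle are indexed mod $n$; at every time there is a bijection between $n$ individuals and the nodes, and each individual has a type (label) $x$ or $o$. Initially each node independently receives label $x$ or $o$ with probability $1/2$ each. With sign $+1$ for $x$ and $-1$ for $o$, the $x$-bias $\beta_t(i)$ of node $i$ at time $t$ is the sum of the signs of the labels of nodes $i-w,\dots,i+w$ (mod $n$). An individual of type $x$ at node $i$ is happy iff $\beta_t(i)>0$, one of type $o$ iff $\beta_t(i)<0$; otherwise unhappy. At each time step two individuals are chosen uniformly at random; if both are unhappy and of opposite types they exchange nodes, otherwise nothing changes. A frozen configuration is one in which no further swaps are possible (i.e. there are not both an unhappy $x$ and an unhappy $o$). *)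

From mathcomp Require Import all_boot all_order all_algebra.
Set Implicit Arguments. Unset Strict Implicit. Unset Printing Implicit Defensive.
Import Order.TTheory GRing.Theory Num.Theory.
Local Open Scope ring_scope.

(* A configuration of the n-cycle: the label of each node,
   true = type x, false = type o.  Individuals of the same type are
   interchangeable for the dynamics, so only labels are recorded. *)
Definition config (n : nat) := (n.-tuple bool)%type.

Definition lab n (c : config n) (j : nat) : bool := nth false c (j %% n).

Definition sgn (b : bool) : int := if b then 1 else -1.

(* x-bias of node i: sum of signs of nodes i-w, ..., i+w (mod n).
   The index i + n*w + k - w is congruent to i + k - w mod n and
   is computed without truncation for n >= 1. *)
Definition bias n (w : nat) (c : config n) (i : nat) : int :=
  \sum_(k < (2 * w).+1) sgn (lab c (i + n * w + k - w)%N).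

Definition happy n w (c : config n) (i : nat) : bool :=
  if lab c i then 0 < bias w c i else bias w c i < 0.

Definition unhappy n w (c : config n) (i : nat) : bool := ~~ happy w c i.

Definition frozen n w (c : config n) : bool :=
  ~~ [exists i : 'I_n, exists j : 'I_n,
        [&& unhappy w c i, unhappy w c j, lab c i & ~~ lab c j]].

Definition swap_step n w (c : config n) (i j : 'I_n) : config n :=
  if [&& unhappy w c i, unhappy w c j & lab c i != lab c j] then
    [tuple (if k == i then lab c j else if k == j then lab c i else lab c k)
       | k < n]
  else c.

(* transition probability: two distinct individuals chosen uniformly
   at random (ordered pair of distinct nodes, n(n-1) choices) *)
Definition trans n w (c c' : config n) : rat :=
  (#|[set p : 'I_n * 'I_n | (p.1 != p.2) && (swap_step w c p.1 p.2 == c')]|%:R)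
  / (n * n.-1)%:R.

Fixpoint distr (n w : nat) (t : nat) : {ffun config n -> rat} :=
  match t with
  | 0 => [ffun _ => 1 / (2 ^ n)%:R]
  | t'.+1 => [ffun c' => \sum_(c : config n) distr n w t' c * trans w c c']
  end.

(* probability that the configuration at time t is frozen; since frozen
   configurations are absorbing this is nondecreasing in t and its
   supremum over t is the probability of eventually freezing *)
Definition prob_frozen_at n w (t : nat) : rat :=
  \sum_(c : config n | frozen w c) distr n w t c.

From mathcomp Require Import all_boot all_order all_algebra.
From mathcomp Require Import zify ring lra.
Import Order.TTheory GRing.Theory Num.Theory.
Local Open Scope ring_scope.
Set Implicit Arguments. Unset Strict Implicit.

(* Let s = +-1 be the signs of the labels and, for 2w < n, let the potential be
   the sum of s_k s_l over ordered pairs of nodes at cyclic distance at most w.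
   Exchanging an unhappy x at i with an unhappy o at j replaces s by
   s + x (e_i - e_j) with x = s_j - s_i = +-2; this changes the potential by
   2x (W_i - W_j) + x^2 Q, where W is the bias and Q >= 0 because a window meets
   every residue mod n at most once.  Unhappiness forces x (W_i - W_j) >= 4, so
   every effective swap raises the potential by at least 8 and no step lowers it.
   Thus the expected potential grows at each step by at least 8 / (n (n - 1))
   times the probability of not being frozen; as the potential is bounded by
   (2w + 1) n, these probabilities have bounded partial sums, so one of them is
   below eps, for every n >= 2w + 2. *)

Section CircularWindows.
Variables (R : comNzRingType) (n w : nat).
Implicit Types (f g h : nat -> R) (k : nat).

Definition periodic f := forall k, f (k + n)%N = f k.

(* Sum of f over the window of radius w around k on the n-cycle, indexed exactly
   as in [bias]: [k + n * w + d - w] avoids truncated subtraction when [0 < n]. *)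
Definition window_sum f k : R := \sum_(d < (2 * w).+1) f (k + n * w + d - w)%N.

Definition window_form f g : R := \sum_(0 <= k < n) f k * window_sum g k.

Definition ind_mod (a k : nat) : R := if (k %% n == a)%N then 1 else 0.

Lemma periodic_ind_mod a : periodic (ind_mod a).
Proof. by move=> k; rewrite /ind_mod modnDr. Qed.

Lemma periodic_addmul f j k : periodic f -> f (k + n * j)%N = f k.
Proof.
move=> pf; elim: j => [|j IH]; first by rewrite muln0 addn0.
by rewrite mulnS addnCA addnC pf.
Qed.

Lemma sum_periodic_shift h m : periodic h ->
  \sum_(0 <= k < n) h (k + m)%N = \sum_(0 <= k < n) h k.
Proof.
have shift1 g : periodic g -> \sum_(0 <= k < n) g k.+1 = \sum_(0 <= k < n) g k.
  have [-> _|n_gt0 pg] := posnP n; first by rewrite !big_geq.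
  rewrite -(prednK n_gt0) big_nat_recr // big_nat_recl //= prednK // addrC.
  by rewrite -(pg 0%N) add0n.
elim: m h => [|m IH] h ph; first by under eq_bigr do rewrite addn0.
under eq_bigr do rewrite addnS -addSn.
by rewrite (IH (fun k => h k.+1)) ?shift1 // => k; rewrite -addSn ph.
Qed.

Lemma window_formC f g : (0 < n)%N -> periodic f -> periodic g ->
  window_form f g = window_form g f.
Proof.
move=> n_gt0 pf pg; have w_le : (w <= n * w)%N by rewrite leq_pmull.
rewrite /window_form /window_sum.
under eq_bigr do rewrite big_distrr.
under [RHS]eq_bigr do rewrite big_distrr.
rewrite exchange_big [RHS]exchange_big [RHS](reindex_inj rev_ord_inj) /=.
apply: eq_bigr => d _; have d_le : (d <= 2 * w)%N by rewrite -ltnS.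
rewrite -[RHS](sum_periodic_shift (n * w + d - w)); last first.
  move=> k; rewrite pg -[in RHS]pf; congr (_ * f _); lia.
apply: eq_bigr => k _; rewrite mulrC; congr (_ * _).
  by congr g; lia.
by rewrite -[LHS](periodic_addmul (2 * w) k pf) mulnCA; congr f; lia.
Qed.

Lemma eq_window_form f1 f2 g1 g2 : f1 =1 f2 -> g1 =1 g2 ->
  window_form f1 g1 = window_form f2 g2.
Proof.
move=> ef eg; apply: eq_bigr => k _; rewrite ef; congr (_ * _).
by apply: eq_bigr => d _; rewrite eg.
Qed.

Lemma window_sumD f g k :
  window_sum (fun j => f j + g j) k = window_sum f k + window_sum g k.
Proof. exact: big_split. Qed.

Lemma window_sumB f g k :
  window_sum (fun j => f j - g j) k = window_sum f k - window_sum g k.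
Proof. exact: sumrB. Qed.

Lemma window_sumZ x f k : window_sum (fun j => x * f j) k = x * window_sum f k.
Proof. by rewrite /window_sum mulr_sumr. Qed.

Lemma window_form_perturb f g x : (0 < n)%N -> periodic f -> periodic g ->
  window_form (fun k => f k + x * g k) (fun k => f k + x * g k)
  = window_form f f + 2 * x * window_form g f + x ^+ 2 * window_form g g.
Proof.
move=> n_gt0 pf pg.
have -> : window_form (fun k => f k + x * g k) (fun k => f k + x * g k)
    = window_form f f + x * window_form f g + x * window_form g f
      + x ^+ 2 * window_form g g.
  rewrite /window_form !mulr_sumr -!big_split /=; apply: eq_bigr => k _.
  by rewrite window_sumD window_sumZ; ring.
by rewrite window_formC //; ring.
Qed.

Lemma sum_ind_mod_mul a G : (a < n)%N -> \sum_(0 <= k < n) ind_mod a k * G k = G a.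
Proof.
move=> a_lt; rewrite big_mkord (bigD1 (Ordinal a_lt)) //= big1 ?addr0.
  by rewrite /ind_mod modn_small // eqxx mul1r.
move=> k k_neq; rewrite /ind_mod modn_small //.
by case: eqP => [k_a|]; [move: k_neq; rewrite -(inj_eq val_inj) /= k_a eqxx | rewrite mul0r].
Qed.

Lemma window_form_ind_modB a b h : (a < n)%N -> (b < n)%N ->
  window_form (fun k => ind_mod a k - ind_mod b k) h = window_sum h a - window_sum h b.
Proof.
move=> a_lt b_lt; rewrite /window_form.
by under eq_bigr do rewrite mulrBl; rewrite sumrB !sum_ind_mod_mul.
Qed.

End CircularWindows.

Section IndicatorWindows.
Variables (R : numDomainType) (n w : nat).
Hypothesis window_fits : (2 * w < n)%N.

Let n_gt0 : (0 < n)%N. Proof. exact: leq_ltn_trans window_fits. Qed.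

(* The 2w+1 positions of a window are distinct mod n, so at most one of them is a. *)
Lemma window_sum_ind_mod_le1 a k : window_sum n w (ind_mod R n a) k <= 1.
Proof.
have w_le : (w <= n * w)%N by rewrite leq_pmull.
have window_inj (d1 d2 : 'I_(2 * w).+1) :
    ((k + n * w + d1 - w) %% n = (k + n * w + d2 - w) %% n)%N -> d1 = d2.
  have shiftE d : (k + n * w + d - w = (k + n * w - w) + d)%N by lia.
  rewrite !shiftE => /eqP; rewrite eqn_modDl !modn_small; first by move/eqP/val_inj.
    exact: leq_trans (ltn_ord d2) window_fits.
  exact: leq_trans (ltn_ord d1) window_fits.
case: (pickP (fun d : 'I_(2 * w).+1 => (k + n * w + d - w) %% n == a)%N) => [d0 hit|miss].
  rewrite /window_sum (bigD1 d0) //= big1 => [|d d_neq]; first by rewrite /ind_mod hit addr0.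
  rewrite /ind_mod; case: eqP => // /eqP; rewrite -(eqP hit) => /eqP/window_inj d_eq.
  by move: d_neq; rewrite d_eq eqxx.
by rewrite /window_sum big1 // => d _; rewrite /ind_mod miss.
Qed.

Lemma window_sum_ind_mod_self a : (a < n)%N -> 1 <= window_sum n w (ind_mod R n a) a.
Proof.
move=> a_lt; have w_lt : (w < (2 * w).+1)%N by lia.
rewrite /window_sum (bigD1 (Ordinal w_lt)) //= addnK /ind_mod.
have -> : ((a + n * w) %% n = a)%N by rewrite addnC mulnC modnMDl modn_small.
rewrite eqxx lerDl.
by apply: sumr_ge0 => d _; case: eqP.
Qed.

Lemma window_form_ind_mod_ge0 i j : (i < n)%N -> (j < n)%N ->
  0 <= window_form n w (fun k => ind_mod R n i k - ind_mod R n j k)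
                       (fun k => ind_mod R n i k - ind_mod R n j k).
Proof.
move=> i_lt j_lt; rewrite window_form_ind_modB // !window_sumB.
rewrite subr_ge0 (le_trans (y := 1 - 1)) //.
  exact: lerB (window_sum_ind_mod_le1 _ _) (window_sum_ind_mod_self j_lt).
exact: lerB (window_sum_ind_mod_self i_lt) (window_sum_ind_mod_le1 _ _).
Qed.

End IndicatorWindows.

Definition sg n (c : config n) (k : nat) : int := sgn (lab c k).

Definition potential n w (c : config n) : int := window_form n w (sg c) (sg c).

Lemma periodic_sg n (c : config n) : periodic n (sg c).
Proof. by move=> k; rewrite /sg /lab modnDr. Qed.

Lemma biasE n w (c : config n) i : bias w c i = window_sum n w (sg c) i.
Proof. by []. Qed.

Lemma normr_sgn b : `|sgn b| = 1.
Proof. by case: b. Qed.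

Lemma sum_sgn m (F : nat -> bool) :
  \sum_(d < m) sgn (F d) = m%:Z - 2 * \sum_(d < m) (nat_of_bool (~~ F d))%:Z.
Proof.
have -> : m%:Z = \sum_(d < m) 1 by rewrite sumr_const card_ord natz.
rewrite mulr_sumr -sumrB.
by apply: eq_bigr => d _; case: (F d).
Qed.

Lemma window_sum_sg_neq0 n w (c : config n) k : window_sum n w (sg c) k != 0.
Proof.
by rewrite /window_sum /sg (sum_sgn _ (fun d => lab c (k + n * w + d - w))); apply/eqP; lia.
Qed.

Lemma norm_window_sum_sg n w (c : config n) k :
  `|window_sum n w (sg c) k| <= ((2 * w).+1)%:Z.
Proof.
apply: le_trans (ler_norm_sum _ _ _) _.
rewrite (eq_bigr (fun _ => 1)) => [|d _]; last exact: normr_sgn.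
by rewrite sumr_const card_ord natz.
Qed.

Lemma norm_potential n w (c : config n) : `|potential w c| <= ((2 * w).+1 * n)%:Z.
Proof.
apply: le_trans (ler_norm_sum _ _ _) _.
apply: (le_trans (y := \sum_(0 <= k < n) ((2 * w).+1)%:Z)).
  by apply: ler_sum => k _; rewrite normrM normr_sgn mul1r norm_window_sum_sg.
by rewrite sumr_const_nat subn0; lia.
Qed.

Definition exchange_labels n (c : config n) (i j : 'I_n) : config n :=
  [tuple (if k == i then lab c j else if k == j then lab c i else lab c k) | k < n].

Lemma swap_stepE n w (c : config n) (i j : 'I_n) :
  swap_step w c i j = if [&& unhappy w c i, unhappy w c j & lab c i != lab c j]
                      then exchange_labels c i j else c.
Proof. by []. Qed.

Lemma sg_exchange n (c : config n) (i j : 'I_n) : i != j ->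
  sg (exchange_labels c i j)
  =1 fun k => sg c k + (sg c j - sg c i) * (ind_mod int n i k - ind_mod int n j k).
Proof.
move=> ij k; have k_lt : (k %% n < n)%N by rewrite ltn_pmod // (leq_ltn_trans _ (ltn_ord i)).
rewrite /sg {1}/lab -(tnth_nth false _ (Ordinal k_lt)) tnth_mktuple /ind_mod.
rewrite -!(inj_eq val_inj) /=.
case: eqP => [ki|_].
  have /negbTE -> : (k %% n != j)%N by rewrite ki (inj_eq val_inj).
  by rewrite /lab ki !modn_small //; ring.
case: eqP => [kj|_]; last by rewrite /lab modn_mod; ring.
by rewrite /lab kj !modn_small //; ring.
Qed.

Lemma potential_exchange n w (c : config n) (i j : 'I_n) : i != j ->
  let x := sg c j - sg c i in
  let delta k := ind_mod int n i k - ind_mod int n j k in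
  potential w (exchange_labels c i j) = potential w c
    + 2 * x * (window_sum n w (sg c) i - window_sum n w (sg c) j)
    + x ^+ 2 * window_form n w delta delta.
Proof.
move=> ij x delta; have n_gt0 : (0 < n)%N by apply: leq_ltn_trans (ltn_ord i).
rewrite /potential (eq_window_form n w (sg_exchange c ij) (sg_exchange c ij)).
rewrite window_form_perturb ?window_form_ind_modB //; first exact: periodic_sg.
by move=> k; rewrite /delta !periodic_ind_mod.
Qed.

Lemma unhappy_exchange_gain n w (c : config n) (i j : nat) :
  unhappy w c i -> unhappy w c j -> lab c i != lab c j ->
  4 <= (sg c j - sg c i) * (window_sum n w (sg c) i - window_sum n w (sg c) j).
Proof.
have := window_sum_sg_neq0 w c i; have := window_sum_sg_neq0 w c j.
rewrite /unhappy /happy !biasE [sg c i]/sg [sg c j]/sg.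
set Wi := window_sum n w (sg c) i; set Wj := window_sum n w (sg c) j.
by case: (lab c i); case: (lab c j) => /= *; lia.
Qed.

Lemma potential_swap_step n w (c : config n) (i j : 'I_n) : (2 * w < n)%N ->
  potential w c + (if [&& unhappy w c i, unhappy w c j & lab c i != lab c j] then 8 else 0)
  <= potential w (swap_step w c i j).
Proof.
move=> wn; rewrite swap_stepE; case: ifP => [/and3P [ui uj lij] | _]; last by rewrite addr0.
have ij : i != j by apply: contraNneq lij => ->.
rewrite potential_exchange // -addrA lerD2l.
set x := sg c j - sg c i; set D := (X in 2 * x * X).
have gain : 4 <= x * D := unhappy_exchange_gain ui uj lij.
have Q_ge0 := window_form_ind_mod_ge0 int wn (ltn_ord i) (ltn_ord j).
rewrite -[8]addr0 lerD //; last exact: mulr_ge0 (sqr_ge0 x) Q_ge0.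
by rewrite -mulrA; lia.
Qed.

Lemma card_offdiag n : #|[pred p : 'I_n * 'I_n | p.1 != p.2]| = (n * n.-1)%N.
Proof.
rewrite -sum1_card (eq_bigl (fun p => predT p.1 && (p.1 != p.2))) //.
rewrite -(pair_big_dep predT (fun i j : 'I_n => i != j) (fun _ _ => 1%N)) /=.
rewrite (eq_bigr (fun _ => n.-1)) => [|i _]; first by rewrite sum_nat_const card_ord.
rewrite sum1_card -[in RHS](card_ord n) -(cardC1 i).
by apply: eq_card => j; rewrite !inE eq_sym.
Qed.

Lemma offdiag_gt0 n : (1 < n)%N -> (0 < n * n.-1)%N.
Proof. by move=> n_gt1; rewrite muln_gt0; apply/andP; split; lia. Qed.

Lemma sum_offdiag_const (V : nmodType) n (x : V) :
  \sum_(p : 'I_n * 'I_n | p.1 != p.2) x = x *+ (n * n.-1).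
Proof. by rewrite sumr_const card_offdiag. Qed.

Lemma sum_trans_mul n w (c : config n) (F : config n -> rat) :
  \sum_(c' : config n) trans w c c' * F c'
  = (\sum_(p : 'I_n * 'I_n | p.1 != p.2) F (swap_step w c p.1 p.2)) / (n * n.-1)%:R.
Proof.
rewrite /trans; under eq_bigr do rewrite mulrAC.
rewrite -mulr_suml; congr (_ / _).
under eq_bigr do rewrite mulr_natl -sumr_const.
rewrite (exchange_big_dep (fun p : 'I_n * 'I_n => p.1 != p.2)) /= => [|c' p]; last first.
  by rewrite inE => _ /andP [].
apply: eq_bigr => p p_offdiag.
rewrite (eq_bigl (pred1 (swap_step w c p.1 p.2))) ?big_pred1_eq // => c'.
by rewrite inE p_offdiag eq_sym.
Qed.

Lemma trans_ge0 n w (c c' : config n) : 0 <= trans w c c'.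
Proof. by rewrite divr_ge0 ?ler0n. Qed.

Lemma distr_ge0 n w t (c : config n) : 0 <= distr n w t c.
Proof.
elim: t c => [|t IH] c /=; rewrite ffunE; first by rewrite divr_ge0 ?ler0n.
by apply: sumr_ge0 => c0 _; rewrite mulr_ge0 ?trans_ge0.
Qed.

Lemma sum_trans n w (c : config n) : (1 < n)%N -> \sum_(c' : config n) trans w c c' = 1.
Proof.
move=> n_gt1; under eq_bigr do rewrite -[trans _ _ _]mulr1.
by rewrite sum_trans_mul sum_offdiag_const divff // pnatr_eq0 -lt0n offdiag_gt0.
Qed.

Lemma sum_distr n w t : (1 < n)%N -> \sum_(c : config n) distr n w t c = 1.
Proof.
move=> n_gt1; elim: t => [|t IH] /=; under eq_bigr do rewrite ffunE.
  by rewrite sumr_const card_tuple card_bool div1r -(mulr_natr _^-1) mulVf ?pnatr_eq0 ?expn_eq0.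
rewrite exchange_big /=.
by under eq_bigr do rewrite -mulr_sumr sum_trans // mulr1.
Qed.

Definition not_frozen_prob n w t : rat := \sum_(c : config n | ~~ frozen w c) distr n w t c.

Definition expected_potential n w t : rat :=
  \sum_(c : config n) distr n w t c * (potential w c)%:~R.

Lemma prob_frozen_atE n w t : (1 < n)%N -> prob_frozen_at n w t = 1 - not_frozen_prob n w t.
Proof.
move=> n_gt1; rewrite -(sum_distr w t n_gt1) (bigID (fun c => frozen w c)) /=.
by rewrite addrK.
Qed.

Lemma sum_potential_swap_step n w (c : config n) : (2 * w < n)%N ->
  potential w c *+ (n * n.-1) + (if frozen w c then 0 else 8)
  <= \sum_(p : 'I_n * 'I_n | p.1 != p.2) potential w (swap_step w c p.1 p.2).
Proof.
move=> wn; rewrite -sum_offdiag_const.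
apply: le_trans (ler_sum _ (fun p _ => potential_swap_step c p.1 p.2 wn)).
rewrite big_split /= lerD2l.
case: ifP => [_|]; first by apply: sumr_ge0 => p _; case: ifP.
move/negbT; rewrite negbK => /existsP [i /existsP [j /and4P [ui uj li lj]]].
have ij : (i, j).1 != (i, j).2 by apply: contraNneq lj => /= <-.
rewrite (bigD1 (i, j)) //= ui uj li (negbTE lj) /= lerDl.
by apply: sumr_ge0 => p _; case: ifP.
Qed.

Lemma mean_potential_swap_step n w (c : config n) : (1 < n)%N -> (2 * w < n)%N ->
  (potential w c)%:~R + (if frozen w c then 0 else 8) / (n * n.-1)%:R
  <= \sum_(c' : config n) trans w c c' * (potential w c')%:~R :> rat.
Proof.
move=> n_gt1 wn; have K_gt0 : (0 : rat) < (n * n.-1)%:R by rewrite ltr0n offdiag_gt0.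
rewrite sum_trans_mul ler_pdivlMr // mulrDl divfK ?gt_eqF // mulr_natr.
have := sum_potential_swap_step c wn.
rewrite -(ler_int rat) intrD rmorphMn [X in _ <= X -> _]rmorph_sum.
by case: (frozen w c); apply.
Qed.

Lemma expected_potential_step n w t : (1 < n)%N -> (2 * w < n)%N ->
  expected_potential n w t + 8 / (n * n.-1)%:R * not_frozen_prob n w t
  <= expected_potential n w t.+1.
Proof.
move=> n_gt1 wn; rewrite /expected_potential /not_frozen_prob /=.
under [X in _ <= X]eq_bigr do rewrite ffunE mulr_suml.
rewrite [X in _ <= X]exchange_big /= mulr_sumr [X in _ + X]big_mkcond -big_split /=.
apply: ler_sum => c _; under [X in _ <= X]eq_bigr do rewrite -mulrA.
rewrite -mulr_sumr.
apply: le_trans (ler_wpM2l (distr_ge0 w t c) (mean_potential_swap_step c n_gt1 wn)).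
by rewrite mulrDr lerD2l; case: (frozen w c); rewrite /= ?mul0r ?mulr0 // mulrC.
Qed.

Lemma norm_expected_potential n w t : (1 < n)%N ->
  `|expected_potential n w t| <= ((2 * w).+1 * n)%:R.
Proof.
move=> n_gt1.
have -> : ((2 * w).+1 * n)%:R = \sum_(c : config n) distr n w t c * ((2 * w).+1 * n)%:R.
  by rewrite -mulr_suml sum_distr // mul1r.
apply: le_trans (ler_norm_sum _ _ _) _; apply: ler_sum => c _.
rewrite normrM ger0_norm ?distr_ge0 // ler_wpM2l ?distr_ge0 //.
by have := norm_potential w c; rewrite -(ler_int rat) intr_norm.
Qed.

Lemma sum_not_frozen_prob_le n w T : (1 < n)%N -> (2 * w < n)%N ->
  \sum_(t < T) not_frozen_prob n w t <= ((2 * w).+1 * n * (n * n.-1))%:R / 4.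
Proof.
move=> n_gt1 wn; have K_gt0 : (0 : rat) < (n * n.-1)%:R by rewrite ltr0n offdiag_gt0.
have telescope : expected_potential n w 0
    + 8 / (n * n.-1)%:R * \sum_(t < T) not_frozen_prob n w t <= expected_potential n w T.
  elim: T => [|T IH]; first by rewrite big_ord0 mulr0 addr0.
  rewrite big_ord_recr /= mulrDr addrA.
  by apply: le_trans (expected_potential_step T n_gt1 wn); rewrite lerD2r.
move: telescope (norm_expected_potential w 0 n_gt1) (norm_expected_potential w T n_gt1).
rewrite !ler_norml natrM; set S := \sum_(t < T) _; set B := ((2 * w).+1 * n)%:R.
move=> telescope /andP [E0_ge _] /andP [_ ET_le].
have : 8 / (n * n.-1)%:R * S <= 2 * B by lra.
by rewrite mulrAC ler_pdivrMr //; lra.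
Qed.

Lemma bounded_partial_sums_small_term (R : archiRealFieldType) (q : nat -> R) (C eps : R) :
  0 < eps -> (forall T, \sum_(t < T) q t <= C) -> exists t, q t <= eps.
Proof.
move=> eps_gt0 sum_le.
have C_ge0 : 0 <= C by have := sum_le 0%N; rewrite big_ord0.
have := archi_boundP (divr_ge0 C_ge0 (ltW eps_gt0)).
set T := Num.Def.archi_bound _; rewrite ltr_pdivrMr // => C_lt.
have [/existsP [t small] | /existsPn large] := boolP [exists t : 'I_T, q t <= eps].
  by exists t.
suff : T%:R * eps <= C by rewrite leNgt C_lt.
apply: le_trans (sum_le T); rewrite mulr_natl -[T in eps *+ T]card_ord -sumr_const.
by apply: ler_sum => t _; rewrite ltW // ltNge large.
Qed.

Theorem proposition1 (w : nat) (eps : rat) (heps : 0 < eps) :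
  exists N : nat, forall n : nat, (N <= n)%N ->
    exists t : nat, 1 - eps <= prob_frozen_at n w t.
Proof.
exists (2 * w + 2)%N => n n_ge; have n_gt1 : (1 < n)%N by lia.
have window_fits : (2 * w < n)%N by lia.
have [t small] := bounded_partial_sums_small_term heps
  (fun T => sum_not_frozen_prob_le T n_gt1 window_fits).
by exists t; rewrite prob_frozen_atE // lerD2l lerN2.
Qed.
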